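(* Let $d\ge1$ and $a_1,\dots,a_d>0$, and define $F:(0,\infty)\to\mathbb{R}$ by $$F(k)=2k\sum_{j=1}^d\tan\left(\frac{\pi}{2}\left(\frac{ka_j}{\pi}-\left\lfloor\frac{ka_j}{\pi}\right\rfloor\right)\right).$$ Then: (i) a point $k>0$ is a discontinuity of $F$ if and only if $k=m\pi/a_j$ for some $j\in\{1,\dots,d\}$ and some $m\in\mathbb{N}$; (ii) $F$ is strictly increasing on each interval of continuity; (iii) for every $m\in\mathbb{N}$ and $j\in\{1,\dots,d\}$, $\lim_{k\nearrow m\pi/a_j}F(k)=+\infty$.
   Context: $\lfloor\cdot\rfloor$ denotes the floor function and $\mathbb{N}=\{1,2,3,\dots\}$. *)

From Stdlib Require Import Reals Lra Lia.
From Coquelicot Require Import Coquelicot.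
Open Scope R_scope.

(* floor x, as a real: Int_part x = up x - 1 is the integer n with n <= x < n + 1. *)
Definition Rfloor (x : R) : R := IZR (Int_part x).

Definition F (d : nat) (a : nat -> R) (k : R) : R :=
  2 * k * sum_n_m (fun j => tan (PI / 2 * (k * a j / PI - Rfloor (k * a j / PI)))) 1 d.

From Stdlib Require Import Reals Lra Lia Classical ZArith.
From Coquelicot Require Import Coquelicot.
Open Scope R_scope.

(** Write [F k = 2k Σ_j T (k a_j / π)] with [T t = tan (π/2 (t - ⌊t⌋))] ([tan_frac] below).  On each
    interval [[n, n+1)] the function [T] is the increasing branch [t ↦ tan (π/2 (t - n))],
    so it is continuous and increasing away from the integers, and it blows up as
    [t ↗ n] because [tan (π/2 - w) ≥ 1/(2w)] for small [w > 0].  Hence [F] is continuous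
    away from the points [k] with [k a_j / π ∈ ℕ], tends to [+∞] from the left at each of
    them (so it is discontinuous there), and between two consecutive such points it is
    the product of the increasing factor [2k] with a nonnegative increasing sum. *)

Lemma Rfloor_bounds (s : R) : Rfloor s <= s < Rfloor s + 1.
Proof. unfold Rfloor. destruct (base_Int_part s). lra. Qed.

Lemma Rfloor_eq (n : Z) (s : R) : IZR n <= s < IZR n + 1 -> Rfloor s = IZR n.
Proof.
  intros Hs. unfold Rfloor, Int_part.
  rewrite <- (tech_up s (n + 1)) by (rewrite plus_IZR; lra).
  now rewrite Z.add_simpl_r.
Qed.

Lemma IZR_pos_INR (n : Z) : 0 < IZR n -> exists m, (1 <= m)%nat /\ IZR n = INR m.
Proof.
  intros Hn. apply lt_0_IZR in Hn. exists (Z.to_nat n).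
  split; [lia|]. now rewrite INR_IZR_INZ, Z2Nat.id by lia.
Qed.

Lemma tan_PI2_minus_ge_inv (w : R) : 0 < w <= PI / 3 -> / (2 * w) <= tan (PI / 2 - w).
Proof.
  intros [Hw0 Hw]. pose proof PI_RGT_0.
  unfold tan. rewrite sin_shift, cos_shift.
  assert (Hsin : 0 < sin w < w) by (split; [apply sin_gt_0 | apply sin_lt_x]; lra).
  assert (Hcos : / 2 <= cos w).
  { destruct Hw as [Hw | ->]; [|rewrite cos_PI3; lra].
    replace (/ 2) with (cos (PI / 3)) by (rewrite cos_PI3; lra).
    left. apply cos_decreasing_1; lra. }
  apply Rle_trans with (/ (2 * sin w)).
  - apply Rinv_le_contravar; lra.
  - unfold Rdiv. rewrite Rinv_mult.
    apply Rmult_le_compat_r; [left; apply Rinv_0_lt_compat|]; lra.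
Qed.

Lemma sum_n_m_nonneg (f : nat -> R) (n m : nat) :
  (forall i, 0 <= f i) -> 0 <= sum_n_m f n m.
Proof.
  intros Hf. rewrite <- (Rmult_0_r (INR (S m - n))), <- sum_n_m_const.
  now apply sum_n_m_le.
Qed.

Lemma sum_n_m_ge_term (f : nat -> R) (n m j : nat) :
  (forall i, 0 <= f i) -> (n <= j <= m)%nat -> f j <= sum_n_m f n m.
Proof.
  intros Hf [Hnj Hjm]. induction Hjm as [|m Hjm IH].
  - destruct Hnj as [|j Hnj]; [rewrite sum_n_n; lra|].
    rewrite sum_n_Sm by lia.
    pose proof (sum_n_m_nonneg f n j Hf). change (plus ?x ?y) with (x + y). lra.
  - rewrite sum_n_Sm by lia.
    pose proof (Hf (S m)). change (plus ?x ?y) with (x + y). lra.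
Qed.

Lemma sum_n_m_lt (f g : nat -> R) (n m : nat) :
  (n <= m)%nat -> (forall j, (n <= j <= m)%nat -> f j < g j) ->
  sum_n_m f n m < sum_n_m g n m.
Proof.
  intros Hnm Hfg. induction Hnm as [|m Hnm IH].
  - rewrite !sum_n_n. apply Hfg. lia.
  - rewrite !sum_n_Sm by lia. change (plus ?x ?y) with (x + y).
    apply Rplus_lt_compat; [apply IH; intros; apply Hfg|apply Hfg]; lia.
Qed.

Lemma continuous_sum_n_m (f : nat -> R -> R) (n m : nat) (x : R) :
  (forall j, (n <= j <= m)%nat -> continuous (f j) x) ->
  continuous (fun y => sum_n_m (fun j => f j y) n m) x.
Proof.
  intros Hf. destruct (Compare_dec.le_lt_dec n m) as [Hnm|Hmn].
  - induction Hnm as [|m Hnm IH].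
    + apply continuous_ext with (f := f n); [intros; now rewrite sum_n_n|].
      apply Hf. lia.
    + apply continuous_ext with
        (f := fun y => plus (sum_n_m (fun j => f j y) n m) (f (S m) y));
        [intros; now rewrite sum_n_Sm by lia|].
      apply (continuous_plus (V := R_NormedModule));
        [apply IH; intros; apply Hf | apply Hf]; lia.
  - apply continuous_ext with (f := fun _ => zero);
      [intros; now rewrite sum_n_m_zero|].
    apply continuous_const.
Qed.

Lemma at_left_scal (x c : R) :
  0 < c -> filterlim (fun y => y * c) (at_left x) (at_left (x * c)).
Proof.
  intros Hc P [eps HP].
  assert (Hd : 0 < eps / c) by (apply Rdiv_lt_0_compat; [apply cond_pos | lra]).
  exists (mkposreal _ Hd). intros y Hy Hyx. apply HP.
  - change (Rabs (y - x) < eps / c) in Hy. change (Rabs (y * c - x * c) < eps).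
    rewrite <- Rmult_minus_distr_r, Rabs_mult, (Rabs_pos_eq c) by lra.
    now apply Rlt_div_r.
  - now apply Rmult_lt_compat_r.
Qed.

Lemma filterlim_Rmult_p_infty (c : R) :
  0 < c -> filterlim (Rmult c) (Rbar_locally p_infty) (Rbar_locally p_infty).
Proof.
  intros Hc.
  rewrite <- (is_Rbar_mult_unique c p_infty p_infty) at 2
    by (apply is_Rbar_mult_sym, is_Rbar_mult_p_infty_pos; simpl; lra).
  apply filterlim_Rbar_mult_l.
Qed.

Lemma not_continuous_of_at_left_p_infty (f : R -> R) (x : R) :
  filterlim f (at_left x) (Rbar_locally p_infty) -> ~ continuous f x.
Proof.
  intros Hinf Hc.
  assert (Hbig : at_left x (fun y => f x + 1 < f y)) by (apply Hinf; now exists (f x + 1)).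
  assert (Hnear : at_left x (fun y => ball (f x) (mkposreal 1 Rlt_0_1) (f y))).
  { apply filter_le_within. exact (Hc _ (locally_ball (f x) (mkposreal 1 Rlt_0_1))). }
  destruct (filter_ex _ (filter_and _ _ Hbig Hnear)) as [y [Hy1 Hy2]].
  change (Rabs (f y - f x) < 1) in Hy2. apply Rabs_def2 in Hy2. lra.
Qed.

Definition tan_frac (t : R) : R := tan (PI / 2 * (t - Rfloor t)).

Lemma F_tan_frac (d : nat) (a : nat -> R) (k : R) :
  F d a k = 2 * k * sum_n_m (fun j => tan_frac (k * a j / PI)) 1 d.
Proof. reflexivity. Qed.

Lemma tan_frac_branch (n : Z) (t : R) :
  IZR n <= t < IZR n + 1 -> tan_frac t = tan (PI / 2 * (t - IZR n)).
Proof. intros Ht. unfold tan_frac. now rewrite (Rfloor_eq n t Ht). Qed.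

Lemma tan_frac_nonneg (t : R) : 0 <= tan_frac t.
Proof.
  unfold tan_frac. destruct (Rfloor_bounds t). pose proof PI_RGT_0.
  destruct (Req_dec (t - Rfloor t) 0) as [Ht|Ht].
  - rewrite Ht, Rmult_0_r, tan_0. lra.
  - left. apply tan_gt_0; nra.
Qed.

Lemma tan_frac_lt (s t : R) :
  s < t -> (forall n : Z, ~ (s < IZR n <= t)) -> tan_frac s < tan_frac t.
Proof.
  intros Hst Hn. destruct (Rfloor_bounds t) as [Hlo Hhi]. unfold Rfloor in Hlo, Hhi.
  assert (Hs : IZR (Int_part t) <= s).
  { apply Rnot_lt_le. intros Hlt. now apply (Hn (Int_part t)). }
  rewrite (tan_frac_branch (Int_part t) s), (tan_frac_branch (Int_part t) t) by lra.
  pose proof PI_RGT_0. apply tan_increasing; nra.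
Qed.

Lemma tan_frac_continuous (t : R) : (forall n : Z, t <> IZR n) -> continuous tan_frac t.
Proof.
  intros Ht. destruct (Rfloor_bounds t) as [Hlo Hhi]. unfold Rfloor in Hlo, Hhi.
  set (n := Int_part t) in Hlo, Hhi.
  assert (Hn : IZR n < t < IZR n + 1).
  { destruct Hlo as [Hlt|Heq]; [lra|]. exfalso. now apply (Ht n). }
  apply continuous_ext_loc with (g := fun s => tan (PI / 2 * (s - IZR n))).
  - apply (locally_interval _ t (IZR n) (IZR n + 1)); simpl; try lra.
    intros s Hs1 Hs2. symmetry. apply tan_frac_branch. lra.
  - pose proof PI_RGT_0.
    apply (continuous_comp (fun s => PI / 2 * (s - IZR n)) tan).
    + apply (ex_derive_continuous (V := R_NormedModule)). auto_derive. easy.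
    + apply continuous_tan, Rgt_not_eq, cos_gt_0; nra.
Qed.

Lemma tan_frac_below_integer (n : Z) (u : R) :
  0 < u < 1 -> tan_frac (IZR n - u) = tan (PI / 2 - PI / 2 * u).
Proof.
  intros Hu. rewrite (tan_frac_branch (n - 1)) by (rewrite minus_IZR; lra).
  f_equal. rewrite minus_IZR. ring.
Qed.

Lemma tan_frac_at_left_integer (n : Z) :
  filterlim tan_frac (at_left (IZR n)) (Rbar_locally p_infty).
Proof.
  intros P [M HM]. pose proof PI_RGT_0.
  set (M' := Rabs M + 1).
  assert (HM' : 0 < M') by (unfold M'; pose proof (Rabs_pos M); lra).
  (* [u < 2/3] keeps [PI u / 2 <= PI / 3]; [u < 1 / (PI M')] makes [1 / (PI u) > M'] *)
  pose proof (Rmin_l (2 / 3) (/ (PI * M'))). pose proof (Rmin_r (2 / 3) (/ (PI * M'))).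
  set (delta := Rmin (2 / 3) (/ (PI * M'))) in *.
  assert (Hd : 0 < delta) by (apply Rmin_pos; [lra | apply Rinv_0_lt_compat; nra]).
  exists (mkposreal _ Hd). intros t Ht Htn. apply HM.
  change (Rabs (t - IZR n) < delta) in Ht. apply Rabs_def2 in Ht.
  set (u := IZR n - t).
  assert (Hu : 0 < u < delta) by (unfold u; lra).
  replace t with (IZR n - u) by (unfold u; ring).
  rewrite tan_frac_below_integer by lra.
  apply Rlt_le_trans with (/ (2 * (PI / 2 * u))); [|apply tan_PI2_minus_ge_inv; nra].
  replace (2 * (PI / 2 * u)) with (PI * u) by field.
  assert (HPu : PI * u < / M').
  { apply Rlt_le_trans with (PI * / (PI * M')); [apply Rmult_lt_compat_l; lra|].
    right. field. lra. }
  apply Rle_lt_trans with M'; [unfold M'; pose proof (Rle_abs M); lra|].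
  rewrite <- (Rinv_inv M'). apply Rinv_lt_contravar; [|exact HPu].
  apply Rmult_lt_0_compat; [nra | now apply Rinv_0_lt_compat].
Qed.

Lemma tan_frac_scaled_at_left (c : R) (m : nat) :
  0 < c ->
  filterlim (fun k => tan_frac (k * c / PI)) (at_left (INR m * PI / c))
    (Rbar_locally p_infty).
Proof.
  intros Hc. pose proof PI_RGT_0.
  apply filterlim_comp with (G := at_left (IZR (Z.of_nat m)));
    [|apply tan_frac_at_left_integer].
  rewrite <- INR_IZR_INZ.
  replace (INR m) with (INR m * PI / c * (c / PI)) at 2 by (field; lra).
  apply filterlim_ext with (f := fun k => k * (c / PI)); [intros; field; lra|].
  apply at_left_scal, Rdiv_lt_0_compat; lra.
Qed.

Section Discontinuities.

Variables (d : nat) (a : nat -> R).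
Hypothesis ha : forall j, (1 <= j <= d)%nat -> 0 < a j.

Lemma F_continuous (k : R) :
  0 < k -> (forall j m, (1 <= j <= d)%nat -> (1 <= m)%nat -> k <> INR m * PI / a j) ->
  continuous (F d a) k.
Proof.
  intros Hk Hjump. pose proof PI_RGT_0.
  apply continuous_ext with
    (f := fun x => mult (2 * x) (sum_n_m (fun j => tan_frac (x * a j / PI)) 1 d));
    [reflexivity|].
  apply (continuous_mult (K := R_AbsRing)).
  - apply (ex_derive_continuous (V := R_NormedModule)). auto_derive. easy.
  - apply (continuous_sum_n_m (fun j x => tan_frac (x * a j / PI))). intros j Hj.
    pose proof (ha j Hj).
    apply (continuous_comp (fun x => x * a j / PI) tan_frac).
    + apply (ex_derive_continuous (V := R_NormedModule)). auto_derive. lra.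
    + apply tan_frac_continuous. intros n Hn.
      destruct (IZR_pos_INR n) as [m [Hm HnE]].
      { rewrite <- Hn. apply Rdiv_lt_0_compat; nra. }
      apply (Hjump j m Hj Hm). rewrite <- HnE, <- Hn. field. lra.
Qed.

Lemma F_at_left_p_infty (j m : nat) :
  (1 <= j <= d)%nat -> (1 <= m)%nat ->
  filterlim (F d a) (at_left (INR m * PI / a j)) (Rbar_locally p_infty).
Proof.
  intros Hj Hm. pose proof (ha j Hj). pose proof PI_RGT_0.
  set (k0 := INR m * PI / a j).
  assert (Hk0 : 0 < k0).
  { assert (1 <= INR m) by (apply (le_INR 1); lia). unfold k0. apply Rdiv_lt_0_compat; nra. }
  assert (Hscaled : filterlim (fun k => k0 * tan_frac (k * a j / PI)) (at_left k0)
                      (Rbar_locally p_infty)).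
  { apply (filterlim_comp _ _ _ _ (Rmult k0) _ (Rbar_locally p_infty));
      [apply tan_frac_scaled_at_left; lra|].
    now apply filterlim_Rmult_p_infty. }
  apply (fun Hle => filterlim_ge_p_infty _ _ Hle Hscaled).
  (* for [k > k0 / 2]: [F k >= 2 k tan_frac (k a_j / PI) >= k0 tan_frac (k a_j / PI)] *)
  assert (Hhalf : 0 < k0 / 2) by lra.
  exists (mkposreal _ Hhalf). intros k Hk _.
  change (Rabs (k - k0) < k0 / 2) in Hk. apply Rabs_def2 in Hk.
  rewrite F_tan_frac.
  assert (Hterm : tan_frac (k * a j / PI)
                  <= sum_n_m (fun i => tan_frac (k * a i / PI)) 1 d).
  { apply (sum_n_m_ge_term (fun i => tan_frac (k * a i / PI))); [|lia].
    intros; apply tan_frac_nonneg. }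
  pose proof (tan_frac_nonneg (k * a j / PI)). nra.
Qed.

Lemma F_not_continuous (j m : nat) :
  (1 <= j <= d)%nat -> (1 <= m)%nat -> ~ continuous (F d a) (INR m * PI / a j).
Proof.
  intros Hj Hm. now apply not_continuous_of_at_left_p_infty, F_at_left_p_infty.
Qed.

Hypothesis hd : (1 <= d)%nat.

Lemma F_lt (x y : R) :
  0 < x -> x < y -> (forall z, x <= z <= y -> continuous (F d a) z) -> F d a x < F d a y.
Proof.
  intros Hx Hxy Hc. pose proof PI_RGT_0. rewrite !F_tan_frac.
  assert (Hsum : sum_n_m (fun j => tan_frac (x * a j / PI)) 1 d
                 < sum_n_m (fun j => tan_frac (y * a j / PI)) 1 d).
  { apply sum_n_m_lt; [exact hd|]. intros j Hj. pose proof (ha j Hj).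
    apply tan_frac_lt.
    { apply Rmult_lt_compat_r; [apply Rinv_0_lt_compat; lra | nra]. }
    intros n [Hxn Hny].
    destruct (IZR_pos_INR n) as [m [Hm HnE]].
    { apply Rlt_trans with (x * a j / PI); [apply Rdiv_lt_0_compat|]; nra. }
    apply (F_not_continuous j m Hj Hm). rewrite <- HnE. apply Hc. split.
    - left. apply Rlt_div_r; [lra|]. apply Rlt_div_l; lra.
    - apply Rle_div_l; [lra|]. apply Rle_div_r; lra. }
  pose proof (sum_n_m_nonneg (fun j => tan_frac (x * a j / PI)) 1 d
                (fun j => tan_frac_nonneg _)).
  nra.
Qed.

End Discontinuities.

Theorem lemma3p1 (d : nat) (a : nat -> R)
  (hd : (1 <= d)%nat) (ha : forall j, (1 <= j <= d)%nat -> 0 < a j) :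
  (* (i) discontinuities *)
  (forall k, 0 < k ->
     (~ continuous (F d a) k <->
      exists j m, (1 <= j <= d)%nat /\ (1 <= m)%nat /\ k = INR m * PI / a j))
  /\
  (* (ii) strictly increasing on each interval of continuity *)
  (forall x y, 0 < x -> x < y ->
     (forall z, x <= z <= y -> continuous (F d a) z) ->
     F d a x < F d a y)
  /\
  (* (iii) left limits at discontinuities are +oo *)
  (forall j m, (1 <= j <= d)%nat -> (1 <= m)%nat ->
     filterlim (F d a) (at_left (INR m * PI / a j)) (Rbar_locally p_infty)).
Proof.
  split; [|split].
  - intros k Hk. split.
    + intros Hdisc. apply NNPP. intros Hno. apply Hdisc, (F_continuous d a ha k Hk).
      intros j m Hj Hm ->. apply Hno. now exists j, m.
    + intros (j & m & Hj & Hm & ->). now apply F_not_continuous.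
  - intros x y Hx Hxy Hc. now apply (F_lt d a ha hd).
  - exact (F_at_left_p_infty d a ha).
Qed.
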